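(* Let $G$ be a game and $\epsilon\ge 0$. The negotiation function $\mathrm{nego}$ of $G$ has a least $\epsilon$-fixed point (for the pointwise order on requirements).
   Context: A game is a tuple $G=(\Pi,V,(V_i)_{i\in\Pi},E,\mu)$ where $\Pi$ is a finite set of players, $(V,E)$ is a finite directed graph in which every vertex has at least one outgoing edge, $(V_i)_{i\in\Pi}$ is a partition of $V$, and $\mu:V^\omega\to\mathbb{R}^\Pi$ is the outcome function. Plays, histories, strategies, strategy profiles, compatibility, $\langle\bar\sigma\rangle_v$ (the play from $v$ generated by a complete profile $\bar\sigma$) and $\bar\sigma_{\|hw}$ (the profile $\sigma_{j\|hw}(h')=\sigma_j(hh')$) are as usual in turn-based games on graphs; $-i$ denotes $\Pi\setminus\{i\}$. A requirement is a map $\lambda:V\to\mathbb{R}\cup\{\pm\infty\}$; requirements are ordered pointwise. A play $\rho$ is $\lambda$-consistent if for every $i\in\Pi$ and every $n$ with $\rho_n\in V_i$, $\mu_i(\rho_n\rho_{n+1}\cdots)\ge\lambda(\rho_n)$. For a player $i$ and vertex $v$, $\lambda\mathrm{Rat}_i(v)$ is the set of profiles $\bar\sigma_{-i}$ in $G_{\|v}$ for which there exists a strategy $\sigma_i$ such that for every history $hw$ from $v$ compatible with $\bar\sigma_{-i}$, the play $\langle\bar\sigma_{\|hw}\rangle_w$ (with $\bar\sigma=(\bar\sigma_{-i},\sigma_i)$) is $\lambda$-consistent. The negotiation function is defined, for $i\in\Pi$ and $v\in V_i$, by $\mathrm{nego}(\lambda)(v)=\inf_{\bar\sigma_{-i}\in\lambda\mathrm{Rat}_i(v)}\sup_{\sigma_i}\mu_i(\langle\bar\sigma_{-i},\sigma_i\rangle_v)$,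 with $\inf\emptyset=+\infty$. For $\epsilon\ge0$, a requirement $\lambda$ is an $\epsilon$-fixed point of $\mathrm{nego}$ if for every $v\in V$, $\lambda(v)-\epsilon\le\mathrm{nego}(\lambda)(v)\le\lambda(v)+\epsilon$ (with $\pm\infty\pm\epsilon=\pm\infty$; in particular the constant requirement $+\infty$ is an $\epsilon$-fixed point). *)

From Stdlib Require Import Reals List ClassicalEpsilon.
From Coquelicot Require Import Coquelicot.
Import ListNotations.
Open Scope R_scope.

(* A game G = (Pi, V, (V_i), E, mu). The partition (V_i) is given by the
   owner function [owner] : V_i = { v | owner v = i }. *)
Record Game := {
  Player : Type;
  Vert : Type;
  player_finite : exists l : list Player, forall i, In i l;
  vert_finite : exists l : list Vert, forall v, In v l;
  edge : Vert -> Vert -> Prop;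
  edge_total : forall v, exists w, edge v w;
  owner : Vert -> Player;
  outcome : (nat -> Vert) -> Player -> R
}.

Section Nego.
Variable G : Game.
Notation V := (Vert G).
Notation Pl := (Player G).

(* A history h ++ [w] is written as the pair (h, w): h is the list of
   vertices before the last vertex w. *)
Definition strategy := list V -> V -> V.
Definition profile := Pl -> strategy.

Definition valid_strategy (i : Pl) (s : strategy) : Prop :=
  forall h w, owner G w = i -> edge G w (s h w).

(* sigma_{-i}: strategies of all players j <> i (component i is ignored). *)
Definition valid_profile_minus (i : Pl) (s : profile) : Prop :=
  forall j, j <> i -> valid_strategy j (s j).

Definition combine (i : Pl) (s : profile) (si : strategy) : profile :=
  fun j => if excluded_middle_informative (j = i) then si else s j.

(* Play generated by the complete profile s after history (h, w), i.e.
   <s_{|hw}>_w : the successive (history, current vertex) pairs. *)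
Fixpoint gen (s : profile) (h : list V) (w : V) (n : nat) : list V * V :=
  match n with
  | O => (h, w)
  | S m => let (h', w') := gen s h w m in
           (h' ++ [w'], s (owner G w') h' w')
  end.

Definition play (s : profile) (h : list V) (w : V) : nat -> V :=
  fun n => snd (gen s h w n).

Definition suffix (rho : nat -> V) (n : nat) : nat -> V := fun k => rho (n + k)%nat.

Definition requirement := V -> Rbar.

Definition consistent (lam : requirement) (rho : nat -> V) : Prop :=
  forall n, Rbar_le (lam (rho n)) (Finite (outcome G (suffix rho n) (owner G (rho n)))).

Definition history_from (v : V) (h : list V) (w : V) : Prop :=
  let full := h ++ [w] in
  nth 0 full w = v /\
  forall k, (k < length h)%nat -> edge G (nth k full w) (nth (S k) full w).

Definition compatible_minus (i : Pl) (s : profile) (h : list V) (w : V) : Prop :=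
  let full := h ++ [w] in
  forall k, (k < length h)%nat ->
    let u := nth k full w in
    owner G u <> i -> nth (S k) full w = s (owner G u) (firstn k full) u.

Definition lamRat (lam : requirement) (i : Pl) (v : V) (s : profile) : Prop :=
  valid_profile_minus i s /\
  exists si, valid_strategy i si /\
    forall h w, history_from v h w -> compatible_minus i s h w ->
      consistent lam (play (combine i s si) h w).

Definition nego (lam : requirement) (v : V) : Rbar :=
  let i := owner G v in
  Rbar_glb (fun x => exists s, lamRat lam i v s /\
     x = Rbar_lub (fun y => exists si, valid_strategy i si /\
            y = Finite (outcome G (play (combine i s si) [] v) i))).

Definition eps_fixed_point (eps : R) (lam : requirement) : Prop :=
  forall v, Rbar_le (Rbar_minus (lam v) (Finite eps)) (nego lam v) /\
            Rbar_le (nego lam v) (Rbar_plus (lam v) (Finite eps)).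

Definition req_le (l1 l2 : requirement) : Prop := forall v, Rbar_le (l1 v) (l2 v).

End Nego.

From Stdlib Require Import Reals Lra.
From Coquelicot Require Import Coquelicot.
Open Scope R_scope.

(* The existence of a least eps-fixed point of the negotiation function is an
   instance of a Knaster-Tarski argument that only uses monotonicity.

   Fix any monotone operator F on Rbar-valued functions over a type T.  Call a
   function l "eps-post-fixed" when F l <= l + eps pointwise, and let mu be the
   pointwise infimum of all eps-post-fixed functions.  By monotonicity mu is
   itself eps-post-fixed, i.e. F mu - eps <= mu.  Then nu := F mu - eps is again
   eps-post-fixed (F nu <= F mu = nu + eps), so mu <= nu = F mu - eps, which
   gives the other half of the eps-fixed-point inequalities (using eps >= 0).
   Every eps-fixed point is eps-post-fixed, hence lies above mu. *)

Lemma Rbar_glb_is_glb (E : Rbar -> Prop) : Rbar_is_glb E (Rbar_glb E).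
Proof. unfold Rbar_glb; destruct (Rbar_ex_glb E) as [m Hm]; exact Hm. Qed.

Lemma Rbar_le_plus_minus (eps : R) (x y : Rbar) :
  Rbar_le x (Rbar_plus y eps) <-> Rbar_le (Rbar_minus x eps) y.
Proof. destruct x, y; simpl; split; intros; try lra; tauto. Qed.

Lemma Rbar_le_minus_weaken (eps : R) (a b : Rbar) :
  0 <= eps -> Rbar_le a (Rbar_minus b eps) -> Rbar_le (Rbar_minus a eps) b.
Proof. destruct a, b; simpl; intros; try lra; tauto. Qed.

Section LeastEpsFixedPoint.

Variable T : Type.

Definition fun_le (l1 l2 : T -> Rbar) : Prop := forall v, Rbar_le (l1 v) (l2 v).

Variable F : (T -> Rbar) -> (T -> Rbar).
Variable eps : R.
Hypothesis eps_ge0 : 0 <= eps.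
Hypothesis F_mono : forall l1 l2 : T -> Rbar, fun_le l1 l2 -> fun_le (F l1) (F l2).

Definition is_eps_fixed (l : T -> Rbar) : Prop :=
  forall v, Rbar_le (Rbar_minus (l v) eps) (F l v) /\
            Rbar_le (F l v) (Rbar_plus (l v) eps).

Definition eps_post_fixed (l : T -> Rbar) : Prop :=
  forall v, Rbar_le (F l v) (Rbar_plus (l v) eps).

Definition least_post_fixed (v : T) : Rbar :=
  Rbar_glb (fun x => exists l, eps_post_fixed l /\ x = l v).

Lemma least_post_fixed_below (l : T -> Rbar) :
  eps_post_fixed l -> fun_le least_post_fixed l.
Proof. intros Hl v; apply (proj1 (Rbar_glb_is_glb _)); now exists l. Qed.

Lemma least_post_fixed_post_fixed : eps_post_fixed least_post_fixed.
Proof.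
  intros v; apply Rbar_le_plus_minus, (proj2 (Rbar_glb_is_glb _)).
  intros x [l [Hl ->]]; apply Rbar_le_plus_minus.
  eapply Rbar_le_trans; [apply F_mono, least_post_fixed_below, Hl | apply Hl].
Qed.

(* The infimum is an eps-fixed point: [F mu - eps] is eps-post-fixed,
   hence above [mu]. *)
Lemma least_post_fixed_eps_fixed : is_eps_fixed least_post_fixed.
Proof.
  set (mu := least_post_fixed).
  set (nu := fun v => Rbar_minus (F mu v) eps).
  assert (nu_le_mu : fun_le nu mu).
  { intros v; apply Rbar_le_plus_minus, least_post_fixed_post_fixed. }
  assert (nu_post : eps_post_fixed nu).
  { intros v; eapply Rbar_le_trans; [apply F_mono, nu_le_mu |].
    apply Rbar_le_plus_minus, Rbar_le_refl. }
  intros v; split.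
  - apply Rbar_le_minus_weaken; [exact eps_ge0 |].
    exact (least_post_fixed_below _ nu_post v).
  - apply least_post_fixed_post_fixed.
Qed.

Theorem least_eps_fixed_point_exists :
  exists l, is_eps_fixed l /\ forall l', is_eps_fixed l' -> fun_le l l'.
Proof.
  exists least_post_fixed; split; [exact least_post_fixed_eps_fixed |].
  intros l' Hl'; apply least_post_fixed_below; intros v; apply Hl'.
Qed.

End LeastEpsFixedPoint.

(* Raising the requirement shrinks each set lamRat, so the infimum defining
   nego can only increase. *)
Lemma nego_mono (G : Game) (l1 l2 : requirement G) :
  req_le G l1 l2 -> forall v, Rbar_le (nego G l1 v) (nego G l2 v).
Proof.
  intros Hle v; unfold nego; apply Rbar_glb_subset.
  intros x [s [[Hs [si [Hsi Hcons]]] Hx]].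
  exists s; split; [| exact Hx].
  split; [exact Hs |]; exists si; split; [exact Hsi |].
  intros h w Hh Hco n; eapply Rbar_le_trans; [apply Hle | apply (Hcons h w Hh Hco n)].
Qed.

(* [eps_fixed_point G eps] and [req_le G] are by definition [is_eps_fixed]
   and [fun_le] for the operator [nego G] on [Vert G]. *)
Theorem mainTheorem2 (G : Game) (eps : R) (Heps : 0 <= eps) :
  exists lam : requirement G,
    eps_fixed_point G eps lam /\
    forall lam' : requirement G, eps_fixed_point G eps lam' -> req_le G lam lam'.
Proof.
  exact (least_eps_fixed_point_exists (Vert G) (nego G) eps Heps (nego_mono G)).
Qed.
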